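(* Let $P>0$, $\zeta\in\mathbb{R}$, and let $q=(q_1,q_2)^\intercal:\mathbb{R}\to\mathbb{C}^2$ be smooth and $P$-periodic. Define $\alpha=-i\zeta$, $\beta=q$, $\gamma=-\overline q$, $\rho=i\zeta I_2$, and $$A=-2i\zeta^2+iq^\intercal\overline q,\quad B=2\zeta q+iq_x,\quad C=-2\zeta\overline q+i\overline q_x,\quad D=2i\zeta^2I_2-i\overline q\,q^\intercal,$$ $X=\begin{pmatrix}\alpha&\beta^\intercal\\ \gamma&\rho\end{pmatrix}$, $T=\begin{pmatrix}A&B^\intercal\\ C&D\end{pmatrix}$ (both $3\times3$), and assume $T_x=XT-TX$ for all $x$. Then $T(x)$ is skew-Hermitian, so every eigenvalue $\Omega$ of $T$ is purely imaginary; and if $\Omega$ is an $x$-independent eigenvalue of $T$ with $\det(D(x)-\Omega I_2)\neq0$ for all $x$, then $$\mathrm{Re}\int_0^P\beta^\intercal(D-\Omega I_2)^{-1}C\,dx=0 .$$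
   Context: This is the Lax pair $v_x=Xv$, $v_t=Tv$ of the Manakov system (two-component vector NLS) $iq_{j,t}+q_{j,xx}+2(|q_1|^2+|q_2|^2)q_j=0$, $j=1,2$, for a stationary potential; the hypothesis $T_x=[X,T]$ is the compatibility condition. $I_2$ is the $2\times2$ identity, overline is complex conjugation, ${}^\intercal$ is transpose. The displayed vanishing is the condition that the eigenfunction $v=e^{\Omega t}y_1(x)\,(a,-(D-\Omega I_2)^{-1}Ca)^\intercal$, $y_1'=(\alpha-\beta^\intercal(D-\Omega I_2)^{-1}C)y_1$, is bounded in $x$. *)

From Stdlib Require Import Reals.
Open Scope R_scope.

Record Cpx := mkC { Cre : R; Cim : R }.

Definition C0 : Cpx := mkC 0 0.
Definition Cof (r : R) : Cpx := mkC r 0.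
Definition Ci : Cpx := mkC 0 1.
Definition Cadd (z w : Cpx) : Cpx := mkC (Cre z + Cre w) (Cim z + Cim w).
Definition Copp (z : Cpx) : Cpx := mkC (- Cre z) (- Cim z).
Definition Csub (z w : Cpx) : Cpx := Cadd z (Copp w).
Definition Cmul (z w : Cpx) : Cpx :=
  mkC (Cre z * Cre w - Cim z * Cim w) (Cre z * Cim w + Cim z * Cre w).
Definition Cconj (z : Cpx) : Cpx := mkC (Cre z) (- Cim z).
Definition Cinv (z : Cpx) : Cpx :=
  mkC (Cre z / (Cre z * Cre z + Cim z * Cim z))
      (- Cim z / (Cre z * Cre z + Cim z * Cim z)).

Definition smoothR (f : R -> R) : Prop :=
  exists d : nat -> R -> R,
    (forall x, d O x = f x) /\
    (forall n x, derivable_pt_lim (d n) x (d (S n) x)).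

Definition smoothC (f : R -> Cpx) : Prop :=
  smoothR (fun x => Cre (f x)) /\ smoothR (fun x => Cim (f x)).

Definition Cderiv (f : R -> Cpx) (x : R) (l : Cpx) : Prop :=
  derivable_pt_lim (fun y => Cre (f y)) x (Cre l) /\
  derivable_pt_lim (fun y => Cim (f y)) x (Cim l).

(* 3x3 matrices, indices 0,1,2 *)
Definition Mat3 := nat -> nat -> Cpx.

Definition mulM3 (M N : Mat3) : Mat3 := fun i j =>
  Cadd (Cmul (M i 0%nat) (N 0%nat j))
       (Cadd (Cmul (M i 1%nat) (N 1%nat j)) (Cmul (M i 2%nat) (N 2%nat j))).

Definition subM3 (M N : Mat3) : Mat3 := fun i j => Csub (M i j) (N i j).

Definition skew_hermitian3 (M : Mat3) : Prop :=
  forall i j, (i < 3)%nat -> (j < 3)%nat -> M i j = Copp (Cconj (M j i)).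

Definition is_eigenvalue3 (M : Mat3) (Om : Cpx) : Prop :=
  exists v : nat -> Cpx,
    (exists k, (k < 3)%nat /\ v k <> C0) /\
    (forall i, (i < 3)%nat ->
       Cadd (Cmul (M i 0%nat) (v 0%nat))
         (Cadd (Cmul (M i 1%nat) (v 1%nat)) (Cmul (M i 2%nat) (v 2%nat)))
       = Cmul Om (v i)).

Section Lax.
Variables (zeta : R) (q1 q2 q1x q2x : R -> Cpx).

Definition qv (x : R) (j : nat) : Cpx := match j with O => q1 x | _ => q2 x end.
Definition qxv (x : R) (j : nat) : Cpx := match j with O => q1x x | _ => q2x x end.

Definition alphaL : Cpx := Cmul (Copp Ci) (Cof zeta).
Definition betaL (x : R) (j : nat) : Cpx := qv x j.
Definition gammaL (x : R) (j : nat) : Cpx := Copp (Cconj (qv x j)).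
Definition rhoL : Cpx := Cmul Ci (Cof zeta).

Definition AL (x : R) : Cpx :=
  Cadd (Cmul (Cof (-2)) (Cmul Ci (Cof (zeta * zeta))))
       (Cmul Ci (Cadd (Cmul (q1 x) (Cconj (q1 x))) (Cmul (q2 x) (Cconj (q2 x))))).
Definition BL (x : R) (j : nat) : Cpx :=
  Cadd (Cmul (Cof (2 * zeta)) (qv x j)) (Cmul Ci (qxv x j)).
Definition CL (x : R) (j : nat) : Cpx :=
  Cadd (Cmul (Cof (-2 * zeta)) (Cconj (qv x j))) (Cmul Ci (Cconj (qxv x j))).
Definition DL (x : R) (j k : nat) : Cpx :=
  Csub (if Nat.eqb j k then Cmul (Cof 2) (Cmul Ci (Cof (zeta * zeta))) else C0)
       (Cmul Ci (Cmul (Cconj (qv x j)) (qv x k))).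

Definition Xmat (x : R) : Mat3 := fun i j =>
  match i, j with
  | O, O => alphaL
  | O, S j' => betaL x j'
  | S i', O => gammaL x i'
  | S i', S j' => if Nat.eqb i' j' then rhoL else C0
  end.

Definition Tmat (x : R) : Mat3 := fun i j =>
  match i, j with
  | O, O => AL x
  | O, S j' => BL x j'
  | S i', O => CL x i'
  | S i', S j' => DL x i' j'
  end.

Definition DshiftL (x : R) (Om : Cpx) (j k : nat) : Cpx :=
  Csub (DL x j k) (if Nat.eqb j k then Om else C0).

Definition det2 (M : nat -> nat -> Cpx) : Cpx :=
  Csub (Cmul (M 0%nat 0%nat) (M 1%nat 1%nat)) (Cmul (M 0%nat 1%nat) (M 1%nat 0%nat)).

Definition inv2 (M : nat -> nat -> Cpx) (j k : nat) : Cpx :=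
  let adj := match j, k with
             | O, O => M 1%nat 1%nat
             | O, _ => Copp (M 0%nat 1%nat)
             | _, O => Copp (M 1%nat 0%nat)
             | _, _ => M 0%nat 0%nat
             end in
  Cmul adj (Cinv (det2 M)).

Definition integrandL (Om : Cpx) (x : R) : Cpx :=
  let Mi := inv2 (DshiftL x Om) in
  Cadd (Cadd (Cmul (betaL x 0) (Cmul (Mi 0%nat 0%nat) (CL x 0)))
             (Cmul (betaL x 0) (Cmul (Mi 0%nat 1%nat) (CL x 1))))
       (Cadd (Cmul (betaL x 1) (Cmul (Mi 1%nat 0%nat) (CL x 0)))
             (Cmul (betaL x 1) (Cmul (Mi 1%nat 1%nat) (CL x 1)))).

End Lax.

From Stdlib Require Import Reals Lra Lia FunctionalExtensionality.
Open Scope R_scope.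

(* T is skew-Hermitian by direct computation, so v* T v = Om |v|^2 forces Re Om = 0.
   Where det (D - Om) <> 0, the Om-eigenspace of T is the line through
   v = (1, w), w = -(D - Om)^-1 C. Differentiating (T - Om) v = 0 with T' = [X, T] shows
   that X v - v' lies in the same eigenspace, so v' = X v - (X v)_0 v. Since X is
   skew-Hermitian too, (|v|^2)' = -2 Re (X v)_0 |v|^2, and Re (X v)_0 = Re (beta^T w)
   is minus the real part of the integrand because Re alpha = 0. Hence ln |v|^2 / 2 is a
   primitive of the integrand; it is P-periodic, so the integral over a period vanishes. *)

Definition Cone : Cpx := Cof 1.
Definition Cdiv (z w : Cpx) : Cpx := Cmul z (Cinv w).
Definition Cnorm2 (z : Cpx) : R := Cre z * Cre z + Cim z * Cim z.

Lemma Cext (z w : Cpx) : Cre z = Cre w -> Cim z = Cim w -> z = w.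
Proof. destruct z, w; simpl; intros -> ->; reflexivity. Qed.

Lemma Cnorm2_pos (z : Cpx) : z <> C0 -> 0 < Cnorm2 z.
Proof.
  destruct z as [a b]; unfold Cnorm2; simpl; intro Hz.
  assert (a <> 0 \/ b <> 0) as [Ha | Hb].
  { destruct (Req_dec a 0), (Req_dec b 0); subst; auto. }
  all: nra.
Qed.

Lemma Cring : ring_theory C0 Cone Cadd Cmul Csub Copp (@eq Cpx).
Proof.
  constructor; intros; apply Cext; destruct x; try destruct y; try destruct z;
  unfold C0, Cone, Cof, Cadd, Cmul, Csub, Copp; simpl; ring.
Qed.

Lemma Cfield : field_theory C0 Cone Cadd Cmul Csub Copp Cdiv Cinv (@eq Cpx).
Proof.
  constructor; [exact Cring | | reflexivity |].
  - unfold Cone, C0, Cof; intro H; injection H; lra.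
  - intros z Hz; pose proof (Cnorm2_pos z Hz) as N; unfold Cnorm2 in N.
    apply Cext; destruct z as [a b]; unfold Cinv, Cmul, Cone, Cof; simpl in *;
    field; lra.
Qed.

Add Field Cfield_inst : Cfield.

Lemma Cmul_cancel_l (z a b : Cpx) : z <> C0 -> Cmul z a = Cmul z b -> a = b.
Proof.
  intros Hz H. transitivity (Cmul (Cinv z) (Cmul z a)); [field; exact Hz |].
  rewrite H. field; exact Hz.
Qed.

Lemma Csub_eq0 (a b : Cpx) : Csub a b = C0 -> a = b.
Proof. intro H. transitivity (Cadd (Csub a b) b); [ring | rewrite H; ring]. Qed.

Lemma derivable_pt_lim_eq (f : R -> R) x l l' :
  derivable_pt_lim f x l -> l = l' -> derivable_pt_lim f x l'.
Proof. now intros H <-. Qed.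

Lemma Cderiv_eq f x l l' : Cderiv f x l -> l = l' -> Cderiv f x l'.
Proof. now intros H <-. Qed.

Lemma Cderiv_const c x : Cderiv (fun _ => c) x C0.
Proof. split; apply derivable_pt_lim_const. Qed.

Lemma Cderiv_add f g x lf lg : Cderiv f x lf -> Cderiv g x lg ->
  Cderiv (fun y => Cadd (f y) (g y)) x (Cadd lf lg).
Proof. intros [H1 H2] [H3 H4]; split; now apply derivable_pt_lim_plus. Qed.

Lemma Cderiv_opp f x lf : Cderiv f x lf -> Cderiv (fun y => Copp (f y)) x (Copp lf).
Proof. intros [H1 H2]; split; now apply derivable_pt_lim_opp. Qed.

Lemma Cderiv_sub f g x lf lg : Cderiv f x lf -> Cderiv g x lg ->
  Cderiv (fun y => Csub (f y) (g y)) x (Csub lf lg).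
Proof. intros; apply Cderiv_add; [| apply Cderiv_opp]; assumption. Qed.

Lemma Cderiv_mul f g x lf lg : Cderiv f x lf -> Cderiv g x lg ->
  Cderiv (fun y => Cmul (f y) (g y)) x (Cadd (Cmul lf (g x)) (Cmul (f x) lg)).
Proof.
  intros [H1 H2] [H3 H4]; split; simpl.
  - eapply derivable_pt_lim_eq.
    + apply derivable_pt_lim_minus; apply derivable_pt_lim_mult; eassumption.
    + simpl; ring.
  - eapply derivable_pt_lim_eq.
    + apply derivable_pt_lim_plus; apply derivable_pt_lim_mult; eassumption.
    + simpl; ring.
Qed.

Lemma Cderiv_inv f x lf : f x <> C0 -> Cderiv f x lf ->
  Cderiv (fun y => Cinv (f y)) x (Copp (Cmul lf (Cinv (Cmul (f x) (f x))))).
Proof.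
  intros Hz [H1 H2]. pose proof (Cnorm2_pos _ Hz) as N; unfold Cnorm2 in N.
  assert (HN : derivable_pt_lim (fun y => Cre (f y) * Cre (f y) + Cim (f y) * Cim (f y)) x
     (Cre lf * Cre (f x) + Cre (f x) * Cre lf + (Cim lf * Cim (f x) + Cim (f x) * Cim lf))).
  { apply derivable_pt_lim_plus; now apply derivable_pt_lim_mult. }
  pose proof (derivable_pt_lim_div _ _ _ _ _ H1 HN (Rgt_not_eq _ _ N)) as Hre.
  pose proof (derivable_pt_lim_div _ _ _ _ _ (derivable_pt_lim_opp _ _ _ H2) HN
                (Rgt_not_eq _ _ N)) as Him.
  unfold opp_fct in Him; cbv beta in Hre, Him.
  set (a := Cre (f x)) in *; set (b := Cim (f x)) in *.
  assert (E : (a * a - b * b) * (a * a - b * b) + (a * b + b * a) * (a * b + b * a)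
              = (a * a + b * b) * (a * a + b * b)) by ring.
  split; simpl; fold a b; rewrite E.
  - eapply derivable_pt_lim_eq; [exact Hre |]. unfold Rsqr; field; lra.
  - eapply derivable_pt_lim_eq; [exact Him |]. unfold Rsqr; field; lra.
Qed.

Lemma Cderiv_continuity_re f x l : Cderiv f x l -> continuity_pt (fun y => Cre (f y)) x.
Proof. intros [H _]. apply derivable_continuous_pt. now exists (Cre l). Qed.

Lemma Cderiv_unique f x l1 l2 : Cderiv f x l1 -> Cderiv f x l2 -> l1 = l2.
Proof.
  intros [H1 H2] [H3 H4]. destruct l1, l2; simpl in *.
  f_equal; eapply uniqueness_limite; eassumption.
Qed.

Lemma derivable_pt_lim_shift (f : R -> R) x P l :
  derivable_pt_lim f (x + P) l -> derivable_pt_lim (fun y => f (y + P)) x l.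
Proof.
  intro H. eapply derivable_pt_lim_eq.
  - apply (derivable_pt_lim_comp (fun y => y + P) f).
    + apply derivable_pt_lim_plus; [apply derivable_pt_lim_id | apply derivable_pt_lim_const].
    + exact H.
  - ring.
Qed.

Lemma Cderiv_periodic (q qx : R -> Cpx) P :
  (forall x, Cderiv q x (qx x)) -> (forall x, q (x + P) = q x) ->
  forall x, qx (x + P) = qx x.
Proof.
  intros hd hp x. apply (Cderiv_unique q x); [| apply hd].
  replace q with (fun y => q (y + P)) by (apply functional_extensionality; auto).
  destruct (hd (x + P)) as [H1 H2].
  split; now apply (derivable_pt_lim_shift (fun y => _ (q y))).
Qed.

Lemma derivable_pt_lim_Cnorm2 f x l : Cderiv f x l ->
  derivable_pt_lim (fun y => Cnorm2 (f y)) x (2 * Cre (Cmul (Cconj (f x)) l)).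
Proof.
  intros [H1 H2]. eapply derivable_pt_lim_eq.
  - apply derivable_pt_lim_plus; apply derivable_pt_lim_mult; eassumption.
  - simpl; ring.
Qed.

Lemma RiemannInt_derivable (g f : R -> R) a b : a <= b ->
  (forall x, derivable_pt_lim g x (f x)) -> continuity f ->
  exists pr : Riemann_integrable f a b, RiemannInt pr = g b - g a.
Proof.
  intros Hab Hg Hf.
  assert (Hder : derivable g) by (intro x; exists (f x); apply Hg).
  assert (Hdeq : derive g Hder = f).
  { apply functional_extensionality; intro x. apply derive_pt_eq_0, Hg. }
  subst f.
  exists (continuity_implies_RiemannInt Hab (fun x _ => Hf x)).
  exact (FTC_Riemann (mkC1 Hf) _).
Qed.

(** * Normalised eigenvectors of 3x3 matrices *)

Definition mulMv3 (M : Mat3) (v : nat -> Cpx) (i : nat) : Cpx :=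
  Cadd (Cmul (M i 0%nat) (v 0%nat))
       (Cadd (Cmul (M i 1%nat) (v 1%nat)) (Cmul (M i 2%nat) (v 2%nat))).

Definition mulMv2 (M : nat -> nat -> Cpx) (v : nat -> Cpx) (j : nat) : Cpx :=
  Cadd (Cmul (M j 0%nat) (v 0%nat)) (Cmul (M j 1%nat) (v 1%nat)).

Definition hdot3 (u w : nat -> Cpx) : Cpx :=
  Cadd (Cmul (Cconj (u 0%nat)) (w 0%nat))
       (Cadd (Cmul (Cconj (u 1%nat)) (w 1%nat)) (Cmul (Cconj (u 2%nat)) (w 2%nat))).

Definition vnorm2 (v : nat -> Cpx) : R :=
  Cnorm2 (v 0%nat) + Cnorm2 (v 1%nat) + Cnorm2 (v 2%nat).

Definition commM3 (X T : Mat3) : Mat3 := subM3 (mulM3 X T) (mulM3 T X).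

Lemma skew_hermitian3_hdot_re (M : Mat3) (v : nat -> Cpx) :
  skew_hermitian3 M -> Cre (hdot3 v (mulMv3 M v)) = 0.
Proof.
  intro HM.
  assert (Hd : forall i, (i < 3)%nat -> Cre (M i i) = 0).
  { intros i Hi. pose proof (f_equal Cre (HM i i Hi Hi)) as E; simpl in E; lra. }
  unfold hdot3, mulMv3.
  rewrite (HM 1%nat 0%nat), (HM 2%nat 0%nat), (HM 2%nat 1%nat) by lia.
  pose proof (Hd 0%nat) as D0; pose proof (Hd 1%nat) as D1; pose proof (Hd 2%nat) as D2.
  destruct (M 0%nat 0%nat) as [a0 b0], (M 1%nat 1%nat) as [a1 b1], (M 2%nat 2%nat) as [a2 b2];
  simpl in D0, D1, D2; rewrite D0, D1, D2 by lia; simpl; ring.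
Qed.

Lemma vnorm2_pos (v : nat -> Cpx) k : (k < 3)%nat -> v k <> C0 -> 0 < vnorm2 v.
Proof.
  intros Hk Hv. pose proof (Cnorm2_pos _ Hv) as Hpos.
  assert (Hnn : forall z, 0 <= Cnorm2 z) by (intro z; unfold Cnorm2; nra).
  pose proof (Hnn (v 0%nat)); pose proof (Hnn (v 1%nat)); pose proof (Hnn (v 2%nat)).
  unfold vnorm2; destruct k as [|[|[|k]]]; try lia; lra.
Qed.

Lemma skew_hermitian3_eigenvalue_re (M : Mat3) (Om : Cpx) :
  skew_hermitian3 M -> is_eigenvalue3 M Om -> Cre Om = 0.
Proof.
  intros HM [v [[k [Hk Hvk]] Hv]].
  change (forall i, (i < 3)%nat -> mulMv3 M v i = Cmul Om (v i)) in Hv.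
  assert (E : Cre (hdot3 v (mulMv3 M v)) = Cre Om * vnorm2 v).
  { unfold hdot3. rewrite !Hv by lia. unfold vnorm2. simpl; unfold Cnorm2; ring. }
  rewrite skew_hermitian3_hdot_re in E by exact HM.
  pose proof (vnorm2_pos v k Hk Hvk). nra.
Qed.

Lemma mulMv2_inv2 (M : nat -> nat -> Cpx) (b : nat -> Cpx) j :
  det2 M <> C0 -> (j < 2)%nat -> mulMv2 M (mulMv2 (inv2 M) b) j = b j.
Proof.
  intros Hd Hj; unfold det2 in Hd.
  destruct j as [|[|j]]; try lia; unfold mulMv2, inv2, det2; field; exact Hd.
Qed.

Lemma mulMv2_inv2_unique (M : nat -> nat -> Cpx) (z b : nat -> Cpx) :
  det2 M <> C0 -> (forall j, (j < 2)%nat -> mulMv2 M z j = b j) ->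
  forall j, (j < 2)%nat -> z j = mulMv2 (inv2 M) b j.
Proof.
  intros Hd Hz j Hj; unfold det2 in Hd.
  transitivity (Cadd (Cmul (inv2 M j 0%nat) (mulMv2 M z 0%nat))
                     (Cmul (inv2 M j 1%nat) (mulMv2 M z 1%nat))).
  - destruct j as [|[|j]]; try lia; unfold mulMv2, inv2, det2; field; exact Hd.
  - rewrite !Hz by lia; reflexivity.
Qed.

(* For [t] in block form [[A, B^T], [C, D]], [eigvec t Om] is the paper's eigenvector
   [(1, -(D - Om I_2)^-1 C)] with [a = 1]. *)

Definition lower_block_shift (t : Mat3) (Om : Cpx) (j k : nat) : Cpx :=
  Csub (t (S j) (S k)) (if Nat.eqb j k then Om else C0).

Definition eigvec (t : Mat3) (Om : Cpx) (i : nat) : Cpx :=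
  match i with
  | O => Cone
  | S j => Copp (mulMv2 (inv2 (lower_block_shift t Om)) (fun k => t (S k) 0%nat) j)
  end.

Lemma eigvec_lower_rows (t : Mat3) (Om : Cpx) j :
  det2 (lower_block_shift t Om) <> C0 -> (j < 2)%nat ->
  mulMv3 t (eigvec t Om) (S j) = Cmul Om (eigvec t Om (S j)).
Proof.
  intros Hd Hj. pose proof (mulMv2_inv2 _ (fun k => t (S k) 0%nat) j Hd Hj) as E.
  apply Csub_eq0.
  transitivity (Csub (t (S j) 0%nat)
    (mulMv2 (lower_block_shift t Om)
            (mulMv2 (inv2 (lower_block_shift t Om)) (fun k => t (S k) 0%nat)) j)).
  - destruct j as [|[|j]]; try lia;
      unfold mulMv3, eigvec, mulMv2, lower_block_shift; cbn [Nat.eqb]; ring.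
  - rewrite E; ring.
Qed.

Lemma eigvec_eigen (t : Mat3) (Om : Cpx) :
  is_eigenvalue3 t Om -> det2 (lower_block_shift t Om) <> C0 ->
  forall i, (i < 3)%nat -> mulMv3 t (eigvec t Om) i = Cmul Om (eigvec t Om i).
Proof.
  intros [u [[k [Hk Huk]] Hu]] Hd i Hi.
  change (forall i, (i < 3)%nat -> mulMv3 t u i = Cmul Om (u i)) in Hu.
  destruct i as [|j]; [| apply eigvec_lower_rows; [exact Hd | lia]].
  assert (Htail : forall j, (j < 2)%nat -> u (S j) = Cmul (u 0%nat) (eigvec t Om (S j))).
  { intros j Hj. apply Csub_eq0.
    transitivity (mulMv2 (inv2 (lower_block_shift t Om)) (fun _ => C0) j); [| unfold mulMv2; ring].
    revert j Hj.
    apply (mulMv2_inv2_unique (lower_block_shift t Om)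
             (fun k => Csub (u (S k)) (Cmul (u 0%nat) (eigvec t Om (S k)))) _ Hd).
    intros j Hj.
    transitivity (Csub (Csub (mulMv3 t u (S j)) (Cmul Om (u (S j))))
                       (Cmul (u 0%nat) (Csub (mulMv3 t (eigvec t Om) (S j))
                                             (Cmul Om (eigvec t Om (S j)))))).
    - destruct j as [|[|j]]; try lia;
        unfold mulMv3, mulMv2, lower_block_shift; cbn [Nat.eqb eigvec]; ring.
    - rewrite Hu, eigvec_lower_rows by (exact Hd || lia). ring. }
  assert (Hu0 : u 0%nat <> C0).
  { intro H0. apply Huk. destruct k as [|[|[|k]]]; try lia; auto;
      [rewrite (Htail 0%nat) | rewrite (Htail 1%nat)]; try lia; rewrite H0; ring. }
  apply (Cmul_cancel_l (u 0%nat)); [exact Hu0 |].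
  transitivity (mulMv3 t u 0).
  - unfold mulMv3; rewrite (Htail 0%nat), (Htail 1%nat) by lia. cbn [eigvec]. ring.
  - rewrite Hu by lia. cbn [eigvec]. ring.
Qed.

Definition riccati_rhs (X : Mat3) (v : nat -> Cpx) (j : nat) : Cpx :=
  Csub (mulMv3 X v (S j)) (Cmul (mulMv3 X v 0%nat) (v (S j))).

Lemma riccati_rhs_lower_rows (t X : Mat3) (Om : Cpx) (v : nat -> Cpx) :
  v 0%nat = Cone -> (forall i, (i < 3)%nat -> mulMv3 t v i = Cmul Om (v i)) ->
  forall j, (j < 2)%nat ->
  mulMv2 (lower_block_shift t Om) (riccati_rhs X v) j = Copp (mulMv3 (commM3 X t) v (S j)).
Proof.
  intros Hv0 Hv j Hj.
  assert (Hcol : forall i, (i < 3)%nat ->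
    t i 0%nat = Csub (Cmul Om (v i))
                     (Cadd (Cmul (t i 1%nat) (v 1%nat)) (Cmul (t i 2%nat) (v 2%nat)))).
  { intros i Hi. rewrite <- Hv by exact Hi. unfold mulMv3. rewrite Hv0. ring. }
  destruct j as [|[|j]]; try lia;
    unfold riccati_rhs, mulMv3, mulMv2, lower_block_shift, commM3, subM3, mulM3; cbn [Nat.eqb];
    rewrite (Hcol 0%nat), (Hcol 1%nat), (Hcol 2%nat), Hv0 by lia; ring.
Qed.

Lemma riccati_rhs_norm (X : Mat3) (v : nat -> Cpx) :
  skew_hermitian3 X -> v 0%nat = Cone ->
  Cre (Cadd (Cmul (Cconj (v 1%nat)) (riccati_rhs X v 0%nat))
            (Cmul (Cconj (v 2%nat)) (riccati_rhs X v 1%nat)))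
  = - Cre (mulMv3 X v 0%nat) * vnorm2 v.
Proof.
  intros HX Hv0. pose proof (skew_hermitian3_hdot_re X v HX) as Q.
  unfold hdot3 in Q; unfold riccati_rhs, vnorm2, Cnorm2.
  rewrite Hv0 in *.
  destruct (mulMv3 X v 0%nat) as [a b], (mulMv3 X v 1%nat) as [c d], (mulMv3 X v 2%nat) as [e f],
    (v 1%nat) as [g h], (v 2%nat) as [k l].
  simpl in *. lra.
Qed.

(** * Eigenvectors along a Lax flow *)

Lemma Cderiv_mulMv2_inv2 (M : R -> nat -> nat -> Cpx) (b : R -> nat -> Cpx) x
  (dM : nat -> nat -> Cpx) (db : nat -> Cpx) :
  (forall j k, (j < 2)%nat -> (k < 2)%nat -> Cderiv (fun y => M y j k) x (dM j k)) ->
  (forall k, (k < 2)%nat -> Cderiv (fun y => b y k) x (db k)) ->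
  det2 (M x) <> C0 ->
  forall j, (j < 2)%nat ->
  Cderiv (fun y => mulMv2 (inv2 (M y)) (b y) j) x
    (mulMv2 (inv2 (M x)) (fun k => Csub (db k) (mulMv2 dM (mulMv2 (inv2 (M x)) (b x)) k)) j).
Proof.
  intros HM Hb Hd j Hj.
  destruct j as [|[|j]]; try lia; unfold mulMv2, inv2; cbv zeta;
    (eapply Cderiv_eq;
     [ repeat first [ apply Cderiv_opp | apply Cderiv_add | apply Cderiv_sub | apply Cderiv_mul
                    | apply Cderiv_inv | apply HM; lia | apply Hb; lia ];
       exact Hd
     | unfold det2 in *; field; exact Hd ]).
Qed.

(* Differentiating (t - Om) v = 0 along t' = [X, t] gives (t - Om) (X v - v') = 0, and
   X v - v' has first component (X v)_0 since v_0 = 1. *)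
Lemma eigvec_deriv (t X : R -> Mat3) (Om : Cpx) x :
  (forall i j, (i < 3)%nat -> (j < 3)%nat ->
     Cderiv (fun y => t y i j) x (commM3 (X x) (t x) i j)) ->
  is_eigenvalue3 (t x) Om -> det2 (lower_block_shift (t x) Om) <> C0 ->
  forall j, (j < 2)%nat ->
  Cderiv (fun y => eigvec (t y) Om (S j)) x (riccati_rhs (X x) (eigvec (t x) Om) j).
Proof.
  intros Hlax Heig Hd j Hj.
  assert (HM : forall j k, (j < 2)%nat -> (k < 2)%nat ->
            Cderiv (fun y => lower_block_shift (t y) Om j k) x (commM3 (X x) (t x) (S j) (S k))).
  { intros a b Ha Hb. eapply Cderiv_eq.
    - apply Cderiv_sub; [apply Hlax; lia | apply Cderiv_const].
    - ring. }
  assert (Hb : forall k, (k < 2)%nat ->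
            Cderiv (fun y => t y (S k) 0%nat) x (commM3 (X x) (t x) (S k) 0%nat)).
  { intros a Ha. apply Hlax; lia. }
  eapply Cderiv_eq.
  { apply Cderiv_opp, (Cderiv_mulMv2_inv2 (fun y => lower_block_shift (t y) Om)
                         (fun y k => t y (S k) 0%nat) _ _ _ HM Hb Hd j Hj). }
  rewrite (mulMv2_inv2_unique _ _ _ Hd
             (riccati_rhs_lower_rows (t x) (X x) Om _ eq_refl (eigvec_eigen _ _ Heig Hd)) j Hj).
  unfold mulMv3; cbn [eigvec]; unfold mulMv2. ring.
Qed.

Lemma ln_vnorm2_eigvec_deriv (t X : R -> Mat3) (Om : Cpx) x :
  skew_hermitian3 (X x) ->
  (forall i j, (i < 3)%nat -> (j < 3)%nat ->
     Cderiv (fun y => t y i j) x (commM3 (X x) (t x) i j)) ->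
  is_eigenvalue3 (t x) Om -> det2 (lower_block_shift (t x) Om) <> C0 ->
  derivable_pt_lim (fun y => ln (vnorm2 (eigvec (t y) Om)) / 2) x
    (- Cre (mulMv3 (X x) (eigvec (t x) Om) 0%nat)).
Proof.
  intros HX Hlax Heig Hd.
  set (v := eigvec (t x) Om).
  assert (Hpos : 0 < vnorm2 v).
  { apply (vnorm2_pos v 0); [lia |]. unfold v, Cone, Cof, C0; simpl.
    intro E; injection E; lra. }
  assert (HN : derivable_pt_lim (fun y => vnorm2 (eigvec (t y) Om)) x
                 (2 * (- Cre (mulMv3 (X x) v 0%nat) * vnorm2 v))).
  { rewrite <- (riccati_rhs_norm (X x) v HX) by reflexivity.
    pose proof (derivable_pt_lim_Cnorm2 _ _ _
                  (eigvec_deriv t X Om x Hlax Heig Hd 0 ltac:(lia))) as H1.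
    pose proof (derivable_pt_lim_Cnorm2 _ _ _
                  (eigvec_deriv t X Om x Hlax Heig Hd 1 ltac:(lia))) as H2.
    eapply derivable_pt_lim_eq.
    - exact (derivable_pt_lim_plus _ _ _ _ _
               (derivable_pt_lim_plus _ _ _ _ _ (derivable_pt_lim_const (Cnorm2 Cone) x) H1) H2).
    - simpl; ring. }
  eapply derivable_pt_lim_eq.
  - apply derivable_pt_lim_div; [| apply derivable_pt_lim_const | lra].
    exact (derivable_pt_lim_comp _ _ _ _ _ HN (derivable_pt_lim_ln _ Hpos)).
  - fold v. unfold Rsqr. field. lra.
Qed.

(** * The Manakov Lax pair *)

Section Manakov.
Variables (zeta : R) (q1 q2 q1x q2x : R -> Cpx).
Local Notation T := (Tmat zeta q1 q2 q1x q2x).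
Local Notation X := (Xmat zeta q1 q2).

Hypotheses (hd1 : forall x, Cderiv q1 x (q1x x)) (hd2 : forall x, Cderiv q2 x (q2x x)).
Hypothesis hlax : forall x i j, (i < 3)%nat -> (j < 3)%nat ->
  Cderiv (fun y => T y i j) x (commM3 (X x) (T x) i j).

Lemma Tmat_skew_hermitian x : skew_hermitian3 (T x).
Proof.
  intros i j Hi Hj.
  destruct i as [|[|[|i]]]; try lia; destruct j as [|[|[|j]]]; try lia;
    apply Cext; unfold Tmat, AL, BL, CL, DL, qv, qxv, Cadd, Cmul, Copp, Cconj, Csub, Cof, Ci, C0;
    simpl; ring.
Qed.

Lemma Xmat_skew_hermitian x : skew_hermitian3 (X x).
Proof.
  intros i j Hi Hj.
  destruct i as [|[|[|i]]]; try lia; destruct j as [|[|[|j]]]; try lia;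
    apply Cext; unfold Xmat, alphaL, betaL, gammaL, rhoL, qv, Cadd, Cmul, Copp, Cconj, Cof, Ci, C0;
    simpl; ring.
Qed.

Lemma integrandL_eigvec Om x :
  integrandL zeta q1 q2 q1x q2x Om x = Csub (alphaL zeta) (mulMv3 (X x) (eigvec (T x) Om) 0%nat).
Proof.
  unfold integrandL, mulMv3; cbn [eigvec Xmat]; unfold mulMv2, betaL, qv; cbn [Tmat].
  change (lower_block_shift (T x) Om) with (DshiftL zeta q1 q2 x Om). ring.
Qed.

Lemma continuity_integrandL_re Om :
  (forall x, is_eigenvalue3 (T x) Om) -> (forall x, det2 (DshiftL zeta q1 q2 x Om) <> C0) ->
  continuity (fun x => Cre (integrandL zeta q1 q2 q1x q2x Om x)).
Proof.
  intros heig hdet x.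
  assert (E : integrandL zeta q1 q2 q1x q2x Om
              = fun y => Csub (alphaL zeta) (mulMv3 (X y) (eigvec (T y) Om) 0%nat)).
  { apply functional_extensionality; intro y; apply integrandL_eigvec. }
  eapply Cderiv_continuity_re. rewrite E.
  apply Cderiv_sub; [apply Cderiv_const |].
  unfold mulMv3; cbn [Xmat]; unfold betaL, qv.
  repeat first [ apply Cderiv_add | apply Cderiv_mul | apply Cderiv_const | apply hd1 | apply hd2
               | exact (Cderiv_const Cone x)
               | apply (eigvec_deriv T X Om x (hlax x) (heig x) (hdet x) 0); lia
               | apply (eigvec_deriv T X Om x (hlax x) (heig x) (hdet x) 1); lia ].
Qed.

Lemma Tmat_periodic P :
  (forall x, q1 (x + P) = q1 x /\ q2 (x + P) = q2 x) -> forall x, T (x + P) = T x.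
Proof.
  intros hper x.
  destruct (hper x) as [E1 E2].
  unfold Tmat, AL, BL, CL, DL, qv, qxv.
  rewrite E1, E2, (Cderiv_periodic q1 q1x P hd1 (fun y => proj1 (hper y)) x),
    (Cderiv_periodic q2 q2x P hd2 (fun y => proj2 (hper y)) x).
  reflexivity.
Qed.

Lemma integrandL_re_deriv Om x :
  is_eigenvalue3 (T x) Om -> det2 (DshiftL zeta q1 q2 x Om) <> C0 ->
  derivable_pt_lim (fun y => ln (vnorm2 (eigvec (T y) Om)) / 2) x
    (Cre (integrandL zeta q1 q2 q1x q2x Om x)).
Proof.
  intros heig hdet.
  replace (Cre (integrandL zeta q1 q2 q1x q2x Om x))
    with (- Cre (mulMv3 (X x) (eigvec (T x) Om) 0%nat))
    by (rewrite integrandL_eigvec; unfold alphaL, Ci, Cof; simpl; ring).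
  exact (ln_vnorm2_eigvec_deriv T X Om x (Xmat_skew_hermitian x) (hlax x) heig hdet).
Qed.

End Manakov.

Theorem mainTheorem5 (P zeta : R) (q1 q2 q1x q2x : R -> Cpx)
  (hP : 0 < P)
  (hs1 : smoothC q1) (hs2 : smoothC q2)
  (hd1 : forall x, Cderiv q1 x (q1x x)) (hd2 : forall x, Cderiv q2 x (q2x x))
  (hper : forall x, q1 (x + P) = q1 x /\ q2 (x + P) = q2 x)
  (hlax : forall x i j, (i < 3)%nat -> (j < 3)%nat ->
     Cderiv (fun y => Tmat zeta q1 q2 q1x q2x y i j) x
            (subM3 (mulM3 (Xmat zeta q1 q2 x) (Tmat zeta q1 q2 q1x q2x x))
                   (mulM3 (Tmat zeta q1 q2 q1x q2x x) (Xmat zeta q1 q2 x)) i j)) :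
  (forall x, skew_hermitian3 (Tmat zeta q1 q2 q1x q2x x)) /\
  (forall x Om, is_eigenvalue3 (Tmat zeta q1 q2 q1x q2x x) Om -> Cre Om = 0) /\
  (forall Om : Cpx,
     (forall x, is_eigenvalue3 (Tmat zeta q1 q2 q1x q2x x) Om) ->
     (forall x, det2 (DshiftL zeta q1 q2 x Om) <> C0) ->
     exists pr : Riemann_integrable
                   (fun x => Cre (integrandL zeta q1 q2 q1x q2x Om x)) 0 P,
       RiemannInt pr = 0).
Proof.
  split; [exact (Tmat_skew_hermitian zeta q1 q2 q1x q2x) |].
  split; [intros x Om; apply skew_hermitian3_eigenvalue_re, Tmat_skew_hermitian |].
  intros Om heig hdet.
  destruct (RiemannInt_derivable _ _ 0 P (Rlt_le _ _ hP)
              (fun x => integrandL_re_deriv zeta q1 q2 q1x q2x hlax Om x (heig x) (hdet x))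
              (continuity_integrandL_re zeta q1 q2 q1x q2x hd1 hd2 hlax Om heig hdet))
    as [pr Hpr].
  exists pr. rewrite Hpr.
  replace P with (0 + P) by ring.
  rewrite (Tmat_periodic zeta q1 q2 q1x q2x hd1 hd2 P hper 0). ring.
Qed.
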